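(* Let $\Gamma=(V,E)$ be a finite simple graph with $V=\{1,\dots,n\}$ and let $A_\Gamma^+$ be the associated right-angled Artin monoid. Let $F\subset A_\Gamma^+$ be a finite subset such that $\vee F\neq\infty$, i.e. $\bigcap_{x\in F} xA_\Gamma^+\neq\emptyset$. Suppose $I\in V$ is an initial vertex of some $x\in F$. Then for each $y\in F$, either $I$ is an initial vertex of $y$, or $I$ is adjacent in $\Gamma$ to every vertex $I(y_j)$ of every syllable $y_j$ of $y$.
   Context: The right-angled Artin monoid is $A_\Gamma^+=\langle e_1,\dots,e_n : e_ie_j=e_je_i \text{ whenever } ij\in E\rangle$, with identity $1$. Every $x\neq 1$ can be written $x=x_1x_2\cdots x_m$ with syllables $x_j=e_{i_j}^{a_j}$, $a_j\ge 1$; the vertex of the syllable $x_j$ is $I(x_j)=i_j$. A shuffle of such an expression swaps two adjacent syllables $x_j,x_{j+1}$ whose vertices are adjacent in $\Gamma$; an amalgamation merges two consecutive syllables with the same vertex into one. An expression is reduced if no sequence of shuffles produces an expression admitting an amalgamation. A vertex $i$ is an initial vertex of $x$ if some reduced expression $x=x_1\cdots x_m$ has $x_1=e_i^{a_1}$ with $a_1\ge1$. For a finite $F\subset A_\Gamma^+$, one writes $\vee F=\infty$ if $\bigcap_{x\in F}xA_\Gamma^+=\emptyset$; otherwise this intersection equals $rA_\Gamma^+$ for a unique $r$, and $\vee F=r$. *)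

From Stdlib Require Import Relations.
From mathcomp Require Import all_boot.
Set Implicit Arguments. Unset Strict Implicit. Unset Printing Implicit Defensive.

(* Vertices are 'I_n (= {1,...,n} shifted to {0,...,n-1}).
   A finite simple graph is given by an adjacency relation adj : rel 'I_n
   which is symmetric and irreflexive. *)
Definition simple_graph n (adj : rel 'I_n) : Prop :=
  (forall i j, adj i j = adj j i) /\ (forall i, adj i i = false).

(* Elements of the right-angled Artin monoid A_Gamma^+ are represented by words
   (seq of generators e_i, written as i) modulo the congruence generated by
   the defining relations e_i e_j = e_j e_i for ij in E. *)
Inductive wstep n (adj : rel 'I_n) : seq 'I_n -> seq 'I_n -> Prop :=
| WStep u v i j : adj i j -> wstep adj (u ++ [:: i; j] ++ v) (u ++ [:: j; i] ++ v).

Definition weq n (adj : rel 'I_n) : seq 'I_n -> seq 'I_n -> Prop :=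
  clos_refl_sym_trans _ (@wstep n adj).

Definition in_right_ideal n (adj : rel 'I_n) (x z : seq 'I_n) : Prop :=
  exists w, weq adj z (x ++ w).

Definition join_finite n (adj : rel 'I_n) (F : seq (seq 'I_n)) : Prop :=
  exists z, forall x, x \in F -> in_right_ideal adj x z.

(* Syllable expressions: a syllable (i, a) stands for e_i^a, with a >= 1. *)
Definition syl_expr n := seq ('I_n * nat).

Definition is_expr n (s : syl_expr n) : Prop := all (fun p => 0 < p.2) s.

Definition eval_expr n (s : syl_expr n) : seq 'I_n :=
  flatten [seq nseq p.2 p.1 | p <- s].

Definition expr_of n (adj : rel 'I_n) (s : syl_expr n) (x : seq 'I_n) : Prop :=
  is_expr s /\ weq adj (eval_expr s) x.

Inductive shuffle n (adj : rel 'I_n) : syl_expr n -> syl_expr n -> Prop :=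
| Shuffle u v p q : adj p.1 q.1 -> shuffle adj (u ++ [:: p; q] ++ v) (u ++ [:: q; p] ++ v).

Definition admits_amalg n (s : syl_expr n) : Prop :=
  exists u v p q, s = u ++ [:: p; q] ++ v /\ p.1 = q.1.

Definition reduced n (adj : rel 'I_n) (s : syl_expr n) : Prop :=
  forall t, clos_refl_trans _ (@shuffle n adj) s t -> ~ admits_amalg t.

Definition initial_vertex n (adj : rel 'I_n) (i : 'I_n) (x : seq 'I_n) : Prop :=
  exists a s, 0 < a /\ expr_of adj ((i, a) :: s) x /\ reduced adj ((i, a) :: s).

(* Call I an initial letter of a word w when I occurs in w and every letter
   before its first occurrence is adjacent to I.  This property is invariant
   under the defining relations, and it characterises initial vertices:
   shuffling the first I-syllable of a reduced expression to the front keeps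
   it reduced.  A common right multiple z of F has initial letter I because
   some x in F does; writing z = y w, either I is already an initial letter
   of y, or the scan for I runs through all of y, so every letter of y is
   adjacent to I. *)
From Stdlib Require Import Relations Classical.
From mathcomp Require Import all_boot.

Set Implicit Arguments.
Unset Strict Implicit.
Unset Printing Implicit Defensive.

Section RightAngledArtinMonoid.
Variables (n : nat) (adj : rel 'I_n).
Hypothesis adjC : forall i j, adj i j = adj j i.

Local Notation shuffles := (clos_refl_trans _ (@shuffle n adj)).

Lemma wstep_sym a b : wstep adj a b -> wstep adj b a.
Proof. by case=> u v i j h; constructor; rewrite adjC. Qed.

Lemma weq_cong c d a b : weq adj a b -> weq adj (c ++ a ++ d) (c ++ b ++ d).
Proof.
elim=> [x y [u v i j h]|x|x y _ h|x y z _ h1 _ h2].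
- have assoc k l : c ++ (u ++ [:: k; l] ++ v) ++ d = (c ++ u) ++ [:: k; l] ++ (v ++ d).
    by rewrite -!catA.
  by apply: rst_step; rewrite !assoc; constructor.
- exact: rst_refl.
- exact: rst_sym.
- exact: rst_trans h2.
Qed.

Lemma weq_mem a b : weq adj a b -> a =i b.
Proof.
elim=> [x y h|//|x y _ h|x y z _ h1 _ h2] w.
- by case: h => u v i j _; rewrite !mem_cat !inE (orbC (w == i)).
- by rewrite h.
- by rewrite h1 h2.
Qed.

Lemma weq_nseq_commute i j a b : adj i j ->
  weq adj (nseq a i ++ nseq b j) (nseq b j ++ nseq a i).
Proof.
move=> ij.
have letter_commute : weq adj (i :: nseq b j) (nseq b j ++ [:: i]).
  elim: b => [|b IH] /=; first exact: rst_refl.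
  apply: rst_trans (_ : weq adj (j :: i :: nseq b j) _).
    by apply: rst_step; apply: (@WStep _ _ [::] (nseq b j) i j).
  by have := weq_cong [:: j] [::] IH; rewrite !cats0.
elim: a => [|a IH] /=; first by rewrite cats0; exact: rst_refl.
apply: rst_trans (_ : weq adj (i :: nseq b j ++ nseq a i) _).
  by have := weq_cong [:: i] [::] IH; rewrite !cats0.
by have := weq_cong [::] (nseq a i) letter_commute; rewrite /= -catA.
Qed.

Lemma eval_expr_cat (s t : syl_expr n) :
  eval_expr (s ++ t) = eval_expr s ++ eval_expr t.
Proof. by rewrite /eval_expr map_cat flatten_cat. Qed.

Lemma eval_expr_cons (p : 'I_n * nat) s :
  eval_expr (p :: s) = nseq p.2 p.1 ++ eval_expr s.
Proof. by []. Qed.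

Lemma mem_eval_expr (s : syl_expr n) p :
  is_expr s -> p \in s -> p.1 \in eval_expr s.
Proof.
elim: s => [//|q s IH] /= /andP [q_gt0 es].
rewrite inE eval_expr_cons mem_cat => /orP [/eqP->|/(IH es)->]; last by rewrite orbT.
by rewrite mem_nseq q_gt0 eqxx.
Qed.

Lemma expr_of_letters x : expr_of adj [seq (i, 1) | i <- x] x.
Proof.
split; first by rewrite /is_expr all_map; apply/allP.
have -> : eval_expr [seq (i, 1) | i <- x] = x.
  by elim: x => //= i x IH; rewrite eval_expr_cons IH.
exact: rst_refl.
Qed.

Lemma shuffles_size s t : shuffles s t -> size s = size t.
Proof.
elim=> [_ _ [u v p q _]|//|x y z _ -> _ //].
by rewrite !size_cat.
Qed.

Lemma shuffles_expr s t y : shuffles s t -> expr_of adj s y -> expr_of adj t y.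
Proof.
elim=> [_ _ [u v p q pq]|//|x w z _ h1 _ h2 /h1/h2 //] [es ws]; split.
  by move: es; rewrite /is_expr !all_cat /= => /and3P [-> /and3P [-> -> _] ->].
apply: rst_trans ws; apply: rst_sym.
by rewrite !eval_expr_cat !eval_expr_cons /= !cats0; apply: weq_cong; apply: weq_nseq_commute.
Qed.

Lemma shuffles_catl c s t : shuffles s t -> shuffles (c ++ s) (c ++ t).
Proof.
elim=> [x y [u v p q pq]|x|x y z _ h1 _ h2].
- have assoc k l : c ++ (u ++ [:: k; l] ++ v) = (c ++ u) ++ [:: k; l] ++ v.
    by rewrite -!catA.
  by apply: rt_step; rewrite !assoc; constructor.
- exact: rt_refl.
- exact: rt_trans h2.
Qed.

Lemma reduced_shuffles s t : shuffles s t -> reduced adj s -> reduced adj t.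
Proof. by move=> st rs r tr; apply: rs; apply: rt_trans tr. Qed.

Lemma amalg_expr u p q v y : p.1 = q.1 ->
  expr_of adj (u ++ [:: p; q] ++ v) y ->
  expr_of adj (u ++ (p.1, p.2 + q.2) :: v) y.
Proof.
rewrite /expr_of /is_expr !all_cat /= => pq [/and3P [eu /and3P [p_gt0 _ _] ev] w].
split; first by rewrite eu ev addn_gt0 p_gt0.
by move: w; rewrite !eval_expr_cat !eval_expr_cons /= nseqD pq -!catA.
Qed.

Lemma exists_reduced_expr s y : expr_of adj s y ->
  exists2 t, expr_of adj t y & reduced adj t.
Proof.
elim/ltn_ind: (size s) {-2}s (erefl (size s)) => m IH {}s sm es.
have [rs|nrs] := classic (reduced adj s); first by exists s.
have [t /not_all_ex_not [st /NNPP [u [v [p [q [tE pq]]]]]]] := not_all_ex_not _ _ nrs.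
have et := shuffles_expr st es; rewrite tE in et.
apply: (IH _ _ _ erefl (amalg_expr pq et)).
by rewrite -sm (shuffles_size st) tE !size_cat /= !addnS ltnS.
Qed.

Variable I : 'I_n.

Fixpoint initial_letter (w : seq 'I_n) : bool :=
  if w is a :: w' then (a == I) || adj I a && initial_letter w' else false.

Lemma initial_letter_wstep a b : wstep adj a b -> initial_letter a -> initial_letter b.
Proof.
case=> u v i j ij; elim: u => [|c u IH] /=; last first.
  by case/orP=> [->//|/andP [-> /IH ->]]; rewrite orbT.
have [iI _|iI] := eqVneq i I; first by rewrite -iI ij orbT.
by have [//|jI] /= := eqVneq j I => /and3P [-> -> ->].
Qed.

Lemma initial_letter_weq a b : weq adj a b -> initial_letter a = initial_letter b.
Proof.
elim=> [x y xy|//|x y _ -> //|x y z _ -> _ -> //].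
by apply/idP/idP; apply: initial_letter_wstep; last apply: wstep_sym.
Qed.

Lemma initial_letter_catr u r : initial_letter u -> initial_letter (u ++ r).
Proof. by elim: u => //= a u IH /orP [->//|/andP [-> /IH ->]]; rewrite orbT. Qed.

Lemma initial_letter_cat u r :
  initial_letter (u ++ r) -> initial_letter u \/ all (adj I) u.
Proof.
elim: u => [|a u IH] /=; first by right.
by case/orP=> [->|/andP [-> /IH [->|->]]]; [left|left; rewrite orbT|right].
Qed.

Lemma initial_letter_split (s : syl_expr n) : is_expr s ->
  initial_letter (eval_expr s) ->
  exists s1 p s2, [/\ s = s1 ++ p :: s2, p.1 = I & all (fun q => adj I q.1) s1].
Proof.
elim: s => [//|[i [//|k]] s IH] /andP [_ /IH {}IH].
rewrite eval_expr_cons; move: (eval_expr s) IH => r IH /=.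
have [-> _|iI] := eqVneq i I; first by exists [::], (I, k.+1), s.
have skip_syllable m : initial_letter (nseq m i ++ r) -> initial_letter r.
  by elim: m => //= m IHm; rewrite (negPf iI) => /andP [_ /IHm].
case/andP=> Ii /skip_syllable /IH [s1 [p [s2 [-> p1 a1]]]].
by exists ((i, k.+1) :: s1), p, s2; rewrite /= Ii a1.
Qed.

Lemma shuffles_to_front s1 (p : 'I_n * nat) s2 :
  p.1 = I -> all (fun q => adj I q.1) s1 -> shuffles (s1 ++ p :: s2) (p :: s1 ++ s2).
Proof.
move=> p1; elim: s1 => [_|q s1 IH /andP [Iq /IH h]] /=; first exact: rt_refl.
apply: rt_trans (shuffles_catl [:: q] h) _.
by apply: rt_step; apply: (@Shuffle _ _ [::] (s1 ++ s2) q p); rewrite p1 adjC.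
Qed.

Lemma initial_vertexP x : initial_vertex adj I x <-> initial_letter x.
Proof.
split=> [[a [s [a_gt0 [[_ w] _]]]]|Ix].
  by rewrite -(initial_letter_weq w) eval_expr_cons -(prednK a_gt0) /= eqxx.
have [s [es w] rs] := exists_reduced_expr (expr_of_letters x).
have [s1 [p [s2 [sE p1 a1]]]] := initial_letter_split es (etrans (initial_letter_weq w) Ix).
have st := shuffles_to_front s2 p1 a1; rewrite -sE in st.
have [/andP [p_gt0 _] _] := shuffles_expr st (conj es w).
exists p.2, (s1 ++ s2); rewrite -p1 -surjective_pairing.
by split; last split; [|apply: shuffles_expr (conj es w)|apply: reduced_shuffles rs].
Qed.

End RightAngledArtinMonoid.

Theorem lemma2p2 (n : nat) (adj : rel 'I_n) (F : seq (seq 'I_n)) (I : 'I_n) :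
  simple_graph adj ->
  join_finite adj F ->
  (exists2 x, x \in F & initial_vertex adj I x) ->
  forall y, y \in F ->
    initial_vertex adj I y \/
    (forall s, expr_of adj s y -> reduced adj s ->
       forall p, p \in s -> adj I p.1).
Proof.
move=> [adjC _] [z zF] [x xF /(initial_vertexP adjC) Ix] y yF.
have [wx zx] := zF x xF; have [wy zy] := zF y yF.
have Iz : initial_letter adj I z.
  by rewrite (initial_letter_weq adjC I zx); apply: initial_letter_catr.
rewrite (initial_letter_weq adjC I zy) in Iz.
have [Iy|adj_y] := initial_letter_cat Iz; first by left; apply/(initial_vertexP adjC).
right=> s [es ws] _ p ps.
by apply: (allP adj_y); rewrite -(weq_mem ws); apply: mem_eval_expr.
Qed.
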